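(* Let $s\in\mathbb N$ and let $\mathbf n\in\mathbb N_0^d$ satisfy $\mathbf n<2^{2m_s+1}\mathbf 1$, $\mathbf n\notin B_{2m_s}$ and $\mathbf n\notin\{0,\dots,2^{m_s}-1\}^d$. Then $\widehat\tau_{\mathbf n}(\Delta^{(m_s)}_{\mathbf l})=0$ for all $\mathbf l<2^{m_s}\mathbf 1$, where $\tau=\tau_F$. The same holds with $\tau$ replaced by $\tau^{\boldsymbol\pi}=\tau_{F^{\boldsymbol\pi}}$ for every sequence $\boldsymbol\pi=(\boldsymbol\pi_s)$ of permutations $\boldsymbol\pi_s$ of $\{0,\dots,2^{m_s}-1\}^d$.
   Context: Fix $d\ge2$. $\mathbb G$ is the dyadic group: sequences $g=(g_k)_{k\ge0}$, $g_k\in\{0,1\}$, coordinatewise addition mod 2, product topology; $\mathbb G^d$ its $d$-th power. For $n\in\mathbb N_0$, $n=\sum_kn_k2^k$, $n_k\in\{0,1\}$. Dyadic interval of rank $k$: $\Delta^{(k)}_m=\{g: g_t=m_{k-1-t},\ 0\le t<k\}$; dyadic cube $\Delta^{(k)}_{\mathbf m}=\prod_l\Delta^{(k)}_{m^l}$. Vector order coordinatewise, $\mathbf 1=(1,\dots,1)$; $B_k=\{\mathbf n\in\mathbb N_0^d: 2^k\mathbf 1\le\mathbf n<2^{k+1}\mathbf 1\}$. Walsh functions $W_n(g)=\prod_k(-1)^{g_kn_k}$, $W_{\mathbf n}(\mathbf g)=\prod_lW_{n^l}(g^l)$; $W^{(k)}_{\mathbf n\mathbf m}$ is the constant value of $W_{\mathbf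 n}$ on $\Delta^{(k)}_{\mathbf m}$ ($\mathbf n,\mathbf m<2^k\mathbf 1$); $R_{k\mathbf 1}:=W_{2^k\mathbf 1}$. Quasimeasure: $\tau$ on dyadic cubes with $\tau(\Delta^{(k)}_{\mathbf m})=\sum_{\boldsymbol\sigma\in\{0,1\}^d}\tau(\Delta^{(k+1)}_{2\mathbf m+\boldsymbol\sigma})$; for a dyadic cube $\Delta$ of rank $r$, $\widehat\tau_{\mathbf n}(\Delta):=\sum_{\Delta^{(k)}_{\mathbf m}\subset\Delta}W^{(k)}_{\mathbf n\mathbf m}\tau(\Delta^{(k)}_{\mathbf m})$ for any $k\ge r$ with $\mathbf n<2^k\mathbf 1$. For nonempty closed $E$, $\tau_E$ is the unique nonnegative quasimeasure with $\tau_E(\mathbb G^d)=1$, $\tau_E(\Delta)=0$ iff $\Delta\cap E=\emptyset$, splitting the value of a cube meeting $E$ equally among its $2^d$ children that meet $E$. Let $m_1=0$, $m_{s+1}=2(2m_s+1)$. $F_s=\bigcup_{\mathbf m,\mathbf m'<2^{m_s}\mathbf 1}\{\mathbf g\in\Delta^{(2m_s)}_{2^{m_s}\mathbf m+\mathbf m'}: R_{2m_s\mathbf 1}(\mathbf g)=W^{(m_s)}_{\mathbf m\mathbf m'}\}$, $F=\bigcap_sF_s$; $F^{\boldsymbol\pi}_s$ is defined likewise with $W^{(m_s)}_{\boldsymbol\pi_s(\mathbf m)\,\mathbf m'}$, and $F^{\boldsymbol\pi}=\bigcap_sF^{\boldsymbol\pi}_s$. *)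

From mathcomp Require Import all_boot all_order all_algebra.
From mathcomp Require Import fingroup perm.
From mathcomp Require Import boolp.
Set Implicit Arguments. Unset Strict Implicit. Unset Printing Implicit Defensive.
Import Order.TTheory GRing.Theory Num.Theory.
Local Open Scope ring_scope.

(* Points of G^d : g l t = t-th coordinate of the l-th component. *)
Definition pt (d : nat) := 'I_d -> nat -> bool.

Definition bit (t n : nat) : bool := odd (n %/ 2 ^ t).

Definition sgn (b : bool) : rat := if b then -1 else 1.

Definition in_cube d (k : nat) (m : 'I_d -> nat) (g : pt d) : Prop :=
  forall (l : 'I_d) (t : nat), (t < k)%N -> g l t = bit (k.-1 - t) (m l).

(* Walsh function W_n(g) = prod_l prod_t (-1)^{g^l_t n^l_t};
   bits t >= n^l of n^l vanish since n^l < 2^(n^l). *)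
Definition walshW d (n : 'I_d -> nat) (g : pt d) : rat :=
  \prod_(l < d) \prod_(t < n l) sgn (g l t && bit t (n l)).

Definition cube_pt d (k : nat) (m : 'I_d -> nat) : pt d :=
  fun l t => if (t < k)%N then bit (k.-1 - t) (m l) else false.

(* W^(k)_{n m}: the (constant) value of W_n on Delta^(k)_m, for n,m < 2^k 1 *)
Definition Wk d (k : nat) (n m : 'I_d -> nat) : rat := walshW n (cube_pt k m).

Definition Rk d (k : nat) : pt d -> rat := walshW (fun _ : 'I_d => 2 ^ k)%N.

(* m_1 = 0, m_{s+1} = 2(2 m_s + 1); mseq 0 is a dummy value. *)
Fixpoint mseq (s : nat) : nat :=
  match s with
  | 0 => 0
  | 1 => 0
  | S s' => (2 * (2 * mseq s' + 1))%N
  end.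

Definition idx d (K : nat) := {ffun 'I_d -> 'I_(2 ^ K)}.

Definition Fs_gen d (s : nat) (p : idx d (mseq s) -> idx d (mseq s)) (g : pt d) : Prop :=
  exists (m m' : idx d (mseq s)),
    in_cube (2 * mseq s) (fun l => 2 ^ mseq s * m l + m' l)%N g /\
    Rk (2 * mseq s) g = Wk (mseq s) (fun l => p m l : nat) (fun l => m' l : nat).

Definition Fpi d (pi : forall s, {perm idx d (mseq s)}) (g : pt d) : Prop :=
  forall s, (1 <= s)%N -> @Fs_gen d s (pi s) g.

Definition Fset d (g : pt d) : Prop :=
  forall s, (1 <= s)%N -> @Fs_gen d s id g.

Definition meets d (E : pt d -> Prop) (k : nat) (m : 'I_d -> nat) : bool :=
  `[< exists g, E g /\ in_cube k m g >].

(* tau_E: tau_E(G^d) = 1, and the value of a cube is split equally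
   among its 2^d children meeting E (children not meeting E get 0). *)
Fixpoint tauE d (E : pt d -> Prop) (k : nat) (m : 'I_d -> nat) : rat :=
  match k with
  | 0 => 1
  | k'.+1 =>
      if meets E k m then
        tauE E k' (fun l => m l %/ 2)%N /
        (#|[set sig : {ffun 'I_d -> bool} |
              meets E k (fun l => 2 * (m l %/ 2) + sig l)%N]|)%:R
      else 0
  end.

(* hat tau_n(Delta^(r)_l) computed at level k (k >= r, n < 2^k 1):
   sum over subcubes Delta^(k)_m of Delta^(r)_l, i.e. m^i %/ 2^(k-r) = l^i. *)
Definition tauhat d (tau : nat -> ('I_d -> nat) -> rat) (n : 'I_d -> nat)
    (r : nat) (l : 'I_d -> nat) (k : nat) : rat :=
  \sum_(m : idx d k | [forall i, (m i %/ 2 ^ (k - r))%N == l i])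
     Wk k n (fun i => m i : nat) * tau k (fun i => m i : nat).

From mathcomp Require Import all_boot all_order all_algebra.
From mathcomp Require Import fingroup perm.
From mathcomp Require Import boolp.
From mathcomp Require Import zify lra.
Set Implicit Arguments. Unset Strict Implicit. Unset Printing Implicit Defensive.
Import Order.TTheory GRing.Theory Num.Theory.
Local Open Scope ring_scope.

(* Let K be the top binary digit of max_i n_i; then m_s <= K <= 2 m_s, and the coefficient
   may be computed at rank K + 1, as a sum over the cubes of rank K of sums over their 2^d
   children.  A cube of rank j meets F^pi iff its points satisfy the constraints F_s with
   2 m_s < j: every later constraint is met by choosing the free bit 2 m_s of one coordinate.
   Hence flipping digit K of the children in a set S of coordinates preserves meeting F^pi,
   provided |S| is even when K = 2 m_s (only the parity of the digits 2 m_s is seen by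
   R_{2 m_s 1}).  Take S = {i} with digit K of n_i equal to 1 when K < 2 m_s, and S = {i, j}
   with these digits different when K = 2 m_s (possible as n is not in B_{2 m_s}): the flip
   is an involution preserving tau and changing the sign of W_n; every cube contributes 0. *)

Lemma divn2_double_add q (b : bool) : ((2 * q + b) %/ 2 = q)%N.
Proof. by case: b => /=; lia. Qed.

Lemma bit0_double_add q (b : bool) : bit 0 (2 * q + b) = b.
Proof. by rewrite /bit expn0 divn1 oddD oddM /=; case: b. Qed.

Lemma bitS_double_add t q (b : bool) : bit t.+1 (2 * q + b) = bit t q.
Proof. by rewrite /bit expnS divnMA divn2_double_add. Qed.

Lemma bit_small t x : (x < 2 ^ t)%N -> bit t x = false.
Proof. by move=> h; rewrite /bit divn_small. Qed.

Lemma bit_exp_leq t x : bit t x -> (2 ^ t <= x)%N.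
Proof. by rewrite leqNgt; apply: contraTN => /bit_small->. Qed.

Lemma bit_msb K x : (2 ^ K <= x < 2 ^ K.+1)%N -> bit K x.
Proof.
move=> /andP[lo hi]; rewrite /bit.
suff -> : (x %/ 2 ^ K = 1)%N by [].
apply/eqP; rewrite eqn_leq -ltnS ltn_divLR ?expn_gt0 // -expnS hi.
by rewrite leq_divRL ?expn_gt0 // mul1n.
Qed.

Lemma bit_exp2 t K : bit t (2 ^ K) = (t == K).
Proof.
rewrite /bit; case: (ltngtP t K) => h.
- by rewrite -(subnK (ltnW h)) expnD mulnK ?expn_gt0 // -(subnSK h) expnS oddM.
- by rewrite divn_small // ltn_exp2l.
- by rewrite h divnn expn_gt0.
Qed.

Lemma mseqS s : (1 <= s)%N -> mseq s.+1 = (2 * (2 * mseq s + 1))%N.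
Proof. by case: s. Qed.

Lemma double_mseq_lt a b : (1 <= a)%N -> (a < b)%N -> (2 * mseq a < mseq b)%N.
Proof.
move=> ha; elim: b => // b IH; rewrite ltnS leq_eqVlt => /orP[/eqP<-|ab].
  by rewrite mseqS //; lia.
by rewrite mseqS ?(leq_trans ha (ltnW ab)) //; have := IH ab; lia.
Qed.

Lemma leq_mseq a b : (1 <= a)%N -> (a <= b)%N -> (mseq a <= mseq b)%N.
Proof.
move=> ha; rewrite leq_eqVlt => /orP[/eqP->//|ab].
by have := double_mseq_lt ha ab; lia.
Qed.

Lemma leq_mseqS s : (s <= mseq s.+1)%N.
Proof. by elim: s => // s IH; rewrite mseqS //; lia. Qed.

Lemma double_mseq_neq s s' K : (1 <= s)%N -> (1 <= s')%N ->
  (mseq s <= K < 2 * mseq s)%N -> (2 * mseq s' != K)%N.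
Proof.
move=> hs hs' /andP[lo hi]; case: (ltnP s' s) => h.
  by have := double_mseq_lt hs' h; lia.
by have := leq_mseq hs h; lia.
Qed.

Section Dyadic.

Variable d : nat.

Definition flip_at (S : {set 'I_d}) (T : nat) (g : pt d) : pt d :=
  fun l t => ((l \in S) && (t == T)) (+) g l t.

Lemma eq_walshW (n : 'I_d -> nat) (g g' : pt d) :
  (forall l t, bit t (n l) -> g l t = g' l t) -> walshW n g = walshW n g'.
Proof.
move=> eq_gg'; apply: eq_bigr => l _; apply: eq_bigr => t _.
by case hb: (bit t (n l)); rewrite ?andbF // eq_gg'.
Qed.

Lemma walshW_pm1 (n : 'I_d -> nat) (g : pt d) : walshW n g = 1 \/ walshW n g = -1.
Proof.
pose pm1 (x : rat) := x = 1 \/ x = -1.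
have pm1M x y : pm1 x -> pm1 y -> pm1 (x * y).
  by move=> [->|->] [->|->]; rewrite /pm1 ?mul1r ?mulN1r ?opprK; [left|right|right|left].
apply: (big_ind pm1) => // [|l _]; first by left.
apply: (big_ind pm1) => // [|t _]; first by left.
by rewrite /pm1 /sgn; case: ifP; [right|left].
Qed.

Lemma walshWD (n : 'I_d -> nat) (g h : pt d) :
  walshW n (fun l t => g l t (+) h l t) = walshW n g * walshW n h.
Proof.
rewrite /walshW -big_split; apply: eq_bigr => l _; rewrite -big_split.
apply: eq_bigr => t _; rewrite /sgn.
by case: (g l t); case: (h l t); case: (bit t (n l)); rewrite /= ?mulr1 ?mulrNN.
Qed.

Lemma walshW_flip_at (n : 'I_d -> nat) S T (g : pt d) :
  walshW n (flip_at S T g) = (-1) ^+ #|[set l in S | bit T (n l)]| * walshW n g.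
Proof.
rewrite walshWD -prodr_const big_mkcond; congr (_ * _); apply: eq_bigr => l _.
rewrite inE; case: ifP => [/andP[lS hb] | hSb].
  have hT : (T < n l)%N := leq_trans (ltn_expl T (ltnSn 1)) (bit_exp_leq hb).
  rewrite (bigD1 (Ordinal hT)) //= lS eqxx hb big1 ?mulr1 // => t ntT.
  by have -> : (t == T :> nat) = false by exact: negbTE ntT.
rewrite big1 // => t _; case: eqP => [-> | _]; last by rewrite andbF.
by rewrite andbT hSb.
Qed.

Definition child (q : 'I_d -> nat) (sg : 'I_d -> bool) : 'I_d -> nat :=
  fun l => (2 * q l + sg l)%N.

Lemma in_cube_pt k (m : 'I_d -> nat) : in_cube k m (cube_pt k m).
Proof. by move=> l t ht; rewrite /cube_pt ht. Qed.

Lemma cube_pt_child k q sg l t :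
  cube_pt k.+1 (child q sg) l t =
  if (t < k)%N then cube_pt k q l t else (t == k) && sg l.
Proof.
rewrite /cube_pt /child; case: (ltngtP t k) => h.
- by rewrite ltnS (ltnW h) (_ : k - t = (k.-1 - t).+1)%N ?bitS_double_add //; lia.
- by rewrite ltnS leqNgt h.
- by rewrite h ltnSn subnn bit0_double_add.
Qed.

Lemma in_cube_child k q sg (g : pt d) :
  in_cube k q g -> (forall l, g l k = sg l) -> in_cube k.+1 (child q sg) g.
Proof.
move=> gq gsg l t; rewrite ltnS leq_eqVlt => /orP[/eqP-> | ht].
  by rewrite subnn bit0_double_add.
by rewrite (_ : k.+1.-1 - t = (k.-1 - t).+1)%N ?bitS_double_add ?gq //; lia.
Qed.

Fixpoint prefix_code (k : nat) (f : nat -> bool) : nat :=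
  if k is k'.+1 then (2 * prefix_code k' f + f k')%N else 0%N.

Lemma prefix_code_lt k f : (prefix_code k f < 2 ^ k)%N.
Proof. by elim: k => //= k IH; rewrite expnS; case: (f k) => /=; lia. Qed.

Lemma in_cube_prefix_code k (g : pt d) : in_cube k (fun l => prefix_code k (g l)) g.
Proof. by elim: k => [//|k IH]; apply: in_cube_child. Qed.

Lemma exists_cube_split M (g : pt d) :
  exists m m' : idx d M, in_cube (2 * M) (fun l => 2 ^ M * m l + m' l)%N g.
Proof.
pose c l := prefix_code (2 * M)%N (g l).
have c_lt l : (c l < 2 ^ M * 2 ^ M)%N by rewrite -expnD addnn -mul2n prefix_code_lt.
have hi l : (c l %/ 2 ^ M < 2 ^ M)%N by rewrite ltn_divLR ?expn_gt0.
have lo l : (c l %% 2 ^ M < 2 ^ M)%N by rewrite ltn_pmod ?expn_gt0.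
exists [ffun l => Ordinal (hi l)], [ffun l => Ordinal (lo l)] => l t ht.
by rewrite !ffunE /= [(2 ^ M * _)%N]mulnC -divn_eq; apply: in_cube_prefix_code.
Qed.

Section TauE.

Variable E : pt d -> Prop.

Definition meeting_children k (q : 'I_d -> nat) :=
  [set sg : {ffun 'I_d -> bool} | meets E k.+1 (child q sg)].

Lemma tauE_child k q sg :
  tauE E k.+1 (child q sg) =
  if meets E k.+1 (child q sg) then tauE E k q / #|meeting_children k q|%:R else 0.
Proof.
pose parent := fun l => (child q sg l %/ 2)%N.
have -> : tauE E k.+1 (child q sg) = if meets E k.+1 (child q sg)
    then tauE E k parent / #|meeting_children k parent|%:R else 0 by [].
by have -> : parent = q by apply: funext => l; rewrite /parent divn2_double_add.
Qed.

Lemma meets_child k q :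
  meets E k q -> exists sg : {ffun 'I_d -> bool}, meets E k.+1 (child q sg).
Proof.
move/asboolP => [g [Eg gq]]; exists [ffun l => g l k]; apply/asboolP.
by exists g; split; last by apply: in_cube_child => // l; rewrite ffunE.
Qed.

Lemma sum_tauE_children k q : (1 <= k)%N ->
  \sum_(sg : {ffun 'I_d -> bool}) tauE E k.+1 (child q sg) = tauE E k q.
Proof.
move=> k_gt0; rewrite (eq_bigr (fun sg => if sg \in meeting_children k q
    then tauE E k q / #|meeting_children k q|%:R else 0)); last first.
  by move=> sg _; rewrite tauE_child inE.
rewrite -big_mkcond sumr_const.
have [N0 | N_gt0] := posnP #|meeting_children k q|.
  rewrite N0 mulr0n; case: k k_gt0 N0 => // k _ N0 /=.
  case meets_q: (meets E k.+1 q) => //.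
  have [sg meets_sg] := meets_child meets_q.
  by move/card0_eq: N0 => /(_ sg); rewrite inE meets_sg.
by rewrite -[_ *+ _]mulr_natr divfK // pnatr_eq0 -lt0n.
Qed.

End TauE.

Lemma child_idx_lt k (q : 'I_(2 ^ k)) (b : bool) : (2 * q + b < 2 ^ k.+1)%N.
Proof. by have := ltn_ord q; move: (val q) => x; rewrite expnS; case: b => /=; lia. Qed.

Lemma parent_idx_lt k (x : 'I_(2 ^ k.+1)) : (x %/ 2 < 2 ^ k)%N.
Proof. by rewrite ltn_divLR // mulnC -expnS. Qed.

Definition child_idx k (x : idx d k * {ffun 'I_d -> bool}) : idx d k.+1 :=
  [ffun i => Ordinal (child_idx_lt (x.1 i) (x.2 i))].

Definition parent_idx k (m : idx d k.+1) : idx d k * {ffun 'I_d -> bool} :=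
  ([ffun i => Ordinal (parent_idx_lt (m i))], [ffun i => odd (m i)]).

Lemma child_idxK k : cancel (@child_idx k) (@parent_idx k).
Proof.
move=> [q sg]; congr pair; apply/ffunP => i; rewrite !ffunE.
  by apply: val_inj; rewrite /= divn2_double_add.
by rewrite /= oddD oddM /=; case: (sg i).
Qed.

Lemma parent_idxK k : cancel (@parent_idx k) (@child_idx k).
Proof. by move=> m; apply/ffunP => i; rewrite !ffunE; apply: val_inj => /=; lia. Qed.

Lemma sum_idx_children r (l : 'I_d -> nat) k (F : ('I_d -> nat) -> rat) : (r <= k)%N ->
  \sum_(m : idx d k.+1 | [forall i, (m i %/ 2 ^ (k.+1 - r))%N == l i])
     F (fun i => m i : nat) =
  \sum_(q : idx d k | [forall i, (q i %/ 2 ^ (k - r))%N == l i])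
     \sum_(sg : {ffun 'I_d -> bool}) F (child (fun i => q i : nat) sg).
Proof.
move=> rk; rewrite (reindex (@child_idx k)) /=; last first.
  by apply: onW_bij; exists (@parent_idx k); [apply: child_idxK | apply: parent_idxK].
rewrite pair_big_dep /=; apply: eq_big => [[q sg] | [q sg] _] /=.
  rewrite andbT; apply: eq_forallb => i.
  by rewrite ffunE /= subSn // expnS divnMA divn2_double_add.
by congr F; apply: funext => i; rewrite ffunE.
Qed.

Lemma tauhat_refine (E : pt d -> Prop) (n l : 'I_d -> nat) r k :
  (r <= k)%N -> (1 <= k)%N -> (forall i, n i < 2 ^ k)%N ->
  tauhat (tauE E) n r l k.+1 = tauhat (tauE E) n r l k.
Proof.
move=> rk k_gt0 n_lt.
rewrite /tauhat (sum_idx_children l (fun f => Wk k.+1 n f * tauE E k.+1 f)) //.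
apply: eq_bigr => q _; rewrite -(sum_tauE_children E _ k_gt0) mulr_sumr.
apply: eq_bigr => sg _; congr (_ * _); apply: eq_walshW => i t nit.
rewrite cube_pt_child ifT //; rewrite ltnNge; apply: contraTN nit => kt.
by rewrite bit_small // (leq_trans (n_lt i)) // leq_exp2l.
Qed.

Lemma tauhat_stable (E : pt d -> Prop) (n l : 'I_d -> nat) r k0 k :
  (r <= k0)%N -> (1 <= k0)%N -> (forall i, n i < 2 ^ k0)%N -> (k0 <= k)%N ->
  tauhat (tauE E) n r l k = tauhat (tauE E) n r l k0.
Proof.
move=> rk0 k0_gt0 n_lt /subnKC <-; elim: (k - k0)%N => [|j IH]; first by rewrite addn0.
rewrite addnS tauhat_refine ?IH ?(leq_trans _ (leq_addr _ _)) // => i.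
by rewrite (leq_trans (n_lt i)) // leq_exp2l ?leq_addr.
Qed.

Definition flip_children (S : {set 'I_d}) (sg : {ffun 'I_d -> bool}) :
  {ffun 'I_d -> bool} :=
  [ffun l => (l \in S) (+) sg l].

Lemma flip_childrenK S : involutive (flip_children S).
Proof. by move=> sg; apply/ffunP => l; rewrite !ffunE addbA addbb. Qed.

Lemma cube_pt_flip_children k q S sg :
  cube_pt k.+1 (child q (flip_children S sg)) = flip_at S k (cube_pt k.+1 (child q sg)).
Proof.
apply: funext => l; apply: funext => t; rewrite /flip_at !cube_pt_child ffunE.
by case: ltnP => [/ltn_eqF-> // | _]; case: (t == k); case: (l \in S).
Qed.

Lemma tauhat_flip_eq0 (E : pt d -> Prop) (n l : 'I_d -> nat) r K (S : {set 'I_d}) :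
  (r <= K)%N -> odd #|[set i in S | bit K (n i)]| ->
  (forall q sg, meets E K.+1 (child q (flip_children S sg)) = meets E K.+1 (child q sg)) ->
  tauhat (tauE E) n r l K.+1 = 0.
Proof.
move=> rK odd_S meets_flip.
rewrite /tauhat (sum_idx_children l (fun f => Wk K.+1 n f * tauE E K.+1 f)) //.
apply: big1 => q _; set sum := (X in X = 0).
suff : sum = - sum by lra.
rewrite {1}/sum (reindex_inj (inv_inj (flip_childrenK S))) -sumrN.
apply: eq_bigr => sg _.
rewrite !tauE_child meets_flip /Wk cube_pt_flip_children walshW_flip_at.
by rewrite -signr_odd odd_S mulN1r mulNr.
Qed.

Lemma Rk_flip_at (S : {set 'I_d}) T (g : pt d) :
  Rk T (flip_at S T g) = (-1) ^+ #|S| * Rk T g.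
Proof.
rewrite /Rk walshW_flip_at; congr (_ ^+ _ * _).
by apply: eq_card => l; rewrite !inE bit_exp2 eqxx andbT.
Qed.

Section FsGen.

Variables (s : nat) (P : idx d (mseq s) -> idx d (mseq s)).

Lemma Fs_gen_prefix (g g' : pt d) :
  (forall l t, (t <= 2 * mseq s)%N -> g' l t = g l t) -> Fs_gen P g -> Fs_gen P g'.
Proof.
move=> eq_g [m [m' [gm R_W]]]; exists m, m'; split.
  by move=> l t ht; rewrite eq_g ?(ltnW ht) //; apply: gm.
by rewrite -R_W /Rk; apply: eq_walshW => l t; rewrite bit_exp2 => /eqP->; apply: eq_g.
Qed.

Lemma Fs_gen_flip_at (S : {set 'I_d}) T (g : pt d) :
  (2 * mseq s <= T)%N -> ((T = 2 * mseq s)%N -> ~~ odd #|S|) ->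
  Fs_gen P g -> Fs_gen P (flip_at S T g).
Proof.
rewrite leq_eqVlt => /orP[/eqP <- | lt_T] even_S Fg; last first.
  apply: Fs_gen_prefix Fg => l t ht.
  by rewrite /flip_at (ltn_eqF (leq_ltn_trans ht lt_T)) andbF.
move: Fg => [m [m' [gm R_W]]]; exists m, m'; split.
  by move=> l t ht; rewrite /flip_at (ltn_eqF ht) andbF; apply: gm.
by rewrite Rk_flip_at -signr_odd (negbTE (even_S erefl)) mul1r.
Qed.

Lemma Fs_gen_flip_free (i0 : 'I_d) (g : pt d) :
  ~ Fs_gen P g -> Fs_gen P (flip_at [set i0] (2 * mseq s)%N g).
Proof.
move=> notFg; have [m [m' gm]] := exists_cube_split (mseq s) g.
exists m, m'; split.
  by move=> l t ht; rewrite /flip_at (ltn_eqF ht) andbF; apply: gm.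
have : Rk (2 * mseq s)%N g != Wk (mseq s) (fun l => P m l : nat) (fun l => m' l : nat).
  by apply/eqP => R_W; apply: notFg; exists m, m'.
rewrite Rk_flip_at cards1 expr1 mulN1r.
move: (walshW_pm1 (fun=> 2 ^ (2 * mseq s))%N g).
move: (walshW_pm1 (fun l => P m l : nat) (cube_pt (mseq s) (fun l => m' l : nat))).
by rewrite /Rk /Wk => -[->|->] [->|->]; rewrite ?eqxx ?opprK.
Qed.

End FsGen.

Definition index_maps := forall s, idx d (mseq s) -> idx d (mseq s).

(* [Fgen (fun s => id)] is [Fset] and [Fgen (fun s => pi s)] is [Fpi pi]. *)
Definition Fgen (p : index_maps) (g : pt d) : Prop :=
  forall s, (1 <= s)%N -> Fs_gen (p s) g.

(* A point of [Fgen p] agreeing with [h0] below rank j: stage s only touches bit 2 m_s,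
   so the stages converge bitwise to [fix_limit]. *)
Section FreeBitConstruction.

Variables (p : index_maps) (i0 : 'I_d) (j : nat) (h0 : pt d).
Arguments p : clear implicits.

Definition fix_stage (s : nat) (h : pt d) : pt d :=
  if `[< Fs_gen (p s) h >] || (2 * mseq s < j)%N then h
  else flip_at [set i0] (2 * mseq s)%N h.

Lemma fix_stage_eq (s : nat) h l t :
  ((t < j) || (t != 2 * mseq s))%N -> fix_stage s h l t = h l t.
Proof.
rewrite /fix_stage; case: ifP => // /norP[_]; rewrite -leqNgt => j_le.
case/orP => [t_lt | /negbTE t_neq]; rewrite /flip_at ?t_neq ?andbF //.
by rewrite (ltn_eqF (leq_trans t_lt j_le)) andbF.
Qed.

Lemma fix_stage_Fs (s : nat) h : (j <= 2 * mseq s)%N -> Fs_gen (p s) (fix_stage s h).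
Proof.
rewrite leqNgt /fix_stage => /negbTE ->; rewrite orbF.
by case: asboolP => // notFh; apply: Fs_gen_flip_free.
Qed.

Fixpoint fix_upto a : pt d := if a is a'.+1 then fix_stage a (fix_upto a') else h0.

Lemma fix_upto_low a l t : (t < j)%N -> fix_upto a l t = h0 l t.
Proof. by move=> t_lt; elim: a => //= a <-; rewrite fix_stage_eq ?t_lt. Qed.

Lemma fix_upto_stable a b : (a <= b)%N ->
  forall l t, (t < 2 * mseq a.+1)%N -> fix_upto b l t = fix_upto a l t.
Proof.
move=> /subnKC <- l t t_lt; elim: (b - a)%N => [|c IH]; first by rewrite addn0.
rewrite addnS /= fix_stage_eq ?IH //; apply/orP; right.
by rewrite ltn_eqF // (leq_trans t_lt) // leq_mul2l leq_mseq // ltnS leq_addr.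
Qed.

Definition fix_limit : pt d := fun l t => fix_upto t.+1 l t.

Lemma fix_limit_agree a l t : (t < 2 * mseq a.+1)%N -> fix_limit l t = fix_upto a l t.
Proof.
move=> t_lt; rewrite /fix_limit; case: (leqP t.+1 a) => h.
  by rewrite (fix_upto_stable h) //; have := leq_mseqS t.+1; lia.
by rewrite (fix_upto_stable (ltnW h)).
Qed.

Lemma fix_limit_Fgen :
  (forall s, (1 <= s)%N -> (2 * mseq s < j)%N -> Fs_gen (p s) h0) -> Fgen p fix_limit.
Proof.
move=> Fh0 s s_gt0; case: (ltnP (2 * mseq s)%N j) => [lt_j | j_le].
  apply: Fs_gen_prefix (Fh0 s s_gt0 lt_j) => l t ht.
  by rewrite /fix_limit fix_upto_low // (leq_ltn_trans ht lt_j).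
have Fs : Fs_gen (p s) (fix_upto s).
  by case: s s_gt0 j_le {Fh0} => // s _; apply: fix_stage_Fs.
apply: Fs_gen_prefix Fs => l t ht; apply: fix_limit_agree.
by have := double_mseq_lt s_gt0 (ltnSn s); lia.
Qed.

End FreeBitConstruction.

Lemma meets_FgenP p (i0 : 'I_d) j (m : 'I_d -> nat) :
  reflect (forall s, (1 <= s)%N -> (2 * mseq s < j)%N -> Fs_gen (p s) (cube_pt j m))
          (meets (Fgen p) j m).
Proof.
apply: (iffP (asboolP _)) => [[g [Fg gm]] s s_gt0 lt_j | Fm].
  apply: Fs_gen_prefix (Fg s s_gt0) => l t ht.
  have t_lt : (t < j)%N := leq_ltn_trans ht lt_j.
  by rewrite /cube_pt t_lt gm.
exists (fix_limit p i0 j (cube_pt j m)); split; first exact: fix_limit_Fgen.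
by move=> l t ht; rewrite /fix_limit fix_upto_low //; apply: in_cube_pt.
Qed.

Lemma meets_Fgen_flip p (i0 : 'I_d) K (S : {set 'I_d}) q sg :
  (forall s, (1 <= s)%N -> (2 * mseq s)%N = K -> ~~ odd #|S|) ->
  meets (Fgen p) K.+1 (child q (flip_children S sg)) = meets (Fgen p) K.+1 (child q sg).
Proof.
move=> even_S.
suff flip_meets (sg' : {ffun 'I_d -> bool}) : meets (Fgen p) K.+1 (child q sg') ->
    meets (Fgen p) K.+1 (child q (flip_children S sg')).
  apply/idP/idP; last exact: flip_meets.
  by rewrite -{2}(flip_childrenK S sg); apply: flip_meets.
move=> /(meets_FgenP _ i0) Fq; apply/(meets_FgenP _ i0) => s s_gt0 lt_K.
rewrite cube_pt_flip_children.
apply: Fs_gen_flip_at (Fq s s_gt0 lt_K); first by rewrite -ltnS.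
by move=> eK; apply: even_S s s_gt0 (esym eK).
Qed.

Lemma exists_top_bit (n : 'I_d -> nat) M N :
  (forall i, n i < 2 ^ N)%N -> ~ (forall i, n i < 2 ^ M)%N ->
  exists2 K, (M <= K < N)%N & (forall i, n i < 2 ^ K.+1)%N /\ exists i, bit K (n i).
Proof.
move=> n_lt n_big; have : ~~ [forall i, n i < 2 ^ M]%N by apply/negP => /forallP.
rewrite negb_forall => /existsP[i1]; rewrite -leqNgt => n_i1.
case: (@arg_maxnP _ i1 predT n isT) => imax _ max_n.
have n_imax : (2 ^ M <= n imax)%N := leq_trans n_i1 (max_n i1 isT).
have /andP[lo hi] :=
  trunc_log_bounds (ltnSn 1) (leq_trans (expn_gt0 2 M) n_imax).
set K := trunc_log 2 (n imax) in lo hi.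
exists K; last split.
- apply/andP; split.
    by rewrite -ltnS -(ltn_exp2l _ _ (ltnSn 1)) (leq_ltn_trans n_imax hi).
  by rewrite -(ltn_exp2l _ _ (ltnSn 1)) (leq_ltn_trans lo (n_lt imax)).
- by move=> i; apply: leq_ltn_trans (max_n i isT) hi.
- by exists imax; apply: bit_msb; rewrite lo hi.
Qed.

Theorem tauhat_Fgen_eq0 (p : index_maps) s (n l : 'I_d -> nat) k : (1 <= s)%N ->
  (forall i, n i < 2 ^ (2 * mseq s).+1)%N ->
  ~ (forall i, 2 ^ (2 * mseq s) <= n i < 2 ^ (2 * mseq s).+1)%N ->
  ~ (forall i, n i < 2 ^ mseq s)%N ->
  (mseq s <= k)%N -> (forall i, n i < 2 ^ k)%N ->
  tauhat (tauE (Fgen p)) n (mseq s) l k = 0.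
Proof.
move=> s_gt0 n_lt n_notB n_big Mk n_ltk; set M := mseq s in n_lt n_notB n_big Mk *.
have [K /andP[MK K_le] [n_ltK [i ni]]] := exists_top_bit n_lt n_big.
have Kk : (K < k)%N.
  by rewrite -(ltn_exp2l _ _ (ltnSn 1)) (leq_ltn_trans (bit_exp_leq ni) (n_ltk i)).
rewrite (@tauhat_stable _ n l M K.+1 k (leqW MK) (ltn0Sn K) n_ltK Kk).
case: (ltnP K (2 * M)%N) => [K_lt | K_ge].
  apply: (@tauhat_flip_eq0 _ n l M K [set i]) => // [|q sg].
    rewrite (_ : [set x in [set i] | bit K (n x)] = [set i]) ?cards1 //.
    by apply/setP => x; rewrite !inE; case: eqP => // ->.
  apply: (meets_Fgen_flip _ i) => s' s'_gt0 eK.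
  by have := double_mseq_neq s_gt0 s'_gt0 (introT andP (conj MK K_lt)); rewrite eK eqxx.
have eK : K = (2 * M)%N by apply/eqP; rewrite eqn_leq -ltnS K_le K_ge.
rewrite -eK in n_lt n_notB.
have : ~~ [forall j, 2 ^ K <= n j]%N.
  by apply/negP => /forallP n_ge; apply: n_notB => j; rewrite n_ge n_lt.
rewrite negb_forall => /existsP[j]; rewrite -ltnNge => /bit_small nj.
have ij : i != j by apply: contraTneq ni => ->; rewrite nj.
apply: (@tauhat_flip_eq0 _ n l M K [set i; j]) => // [|q sg].
  rewrite (_ : [set x in [set i; j] | bit K (n x)] = [set i]) ?cards1 //.
  apply/setP => x; rewrite !inE; case: (eqVneq x i) => [-> // | _].
  by case: eqP => [-> | _]; rewrite ?nj.
by apply: (meets_Fgen_flip _ i) => s' _ _; rewrite cards2 ij.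
Qed.

End Dyadic.

Theorem lemma4 (d : nat) (hd : (2 <= d)%N) (s : nat) (hs : (1 <= s)%N)
  (n : 'I_d -> nat)
  (hn1 : forall i, (n i < 2 ^ (2 * mseq s).+1)%N)
  (hn2 : ~ (forall i, (2 ^ (2 * mseq s) <= n i < 2 ^ (2 * mseq s).+1)%N))
  (hn3 : ~ (forall i, (n i < 2 ^ mseq s)%N)) :
  (forall l : 'I_d -> nat, (forall i, (l i < 2 ^ mseq s)%N) ->
     forall k, (mseq s <= k)%N -> (forall i, (n i < 2 ^ k)%N) ->
     tauhat (tauE (@Fset d)) n (mseq s) l k = 0) /\
  (forall pi : forall s', {perm idx d (mseq s')},
   forall l : 'I_d -> nat, (forall i, (l i < 2 ^ mseq s)%N) ->
     forall k, (mseq s <= k)%N -> (forall i, (n i < 2 ^ k)%N) ->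
     tauhat (tauE (Fpi pi)) n (mseq s) l k = 0).
Proof.
split=> [l _ k Mk n_ltk | pi l _ k Mk n_ltk].
  exact: (@tauhat_Fgen_eq0 d (fun _ => id) s n l k hs hn1 hn2 hn3 Mk n_ltk).
exact: (@tauhat_Fgen_eq0 d (fun s' => pi s') s n l k hs hn1 hn2 hn3 Mk n_ltk).
Qed.
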